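(* Let $c_1>0>c_2$, $\alpha\in[0,1)$, $t_0\in\mathbb R$, let $d_1,d_2$ be as in the context, $\tilde L=d_1-d_2$, and for $t>t_0$ let $$\tilde p_1(t)=\frac{d_2-d_1e^{-\tilde L(t-t_0)}}{1-e^{-\tilde L(t-t_0)}},\quad \tilde p_2(t)=\frac{d_1-d_2e^{-\tilde L(t-t_0)}}{1-e^{-\tilde L(t-t_0)}},$$ $$\tilde q_1(t)=\ln\tilde L+d_2(t-t_0)-\ln\big(d_1e^{-\tilde L(t-t_0)}-d_2\big),\quad \tilde q_2(t)=-\ln\tilde L+d_1(t-t_0)+\ln\big(d_1-d_2e^{-\tilde L(t-t_0)}\big),$$ and $u(t,x)=\tilde p_1(t)e^{-|x-\tilde q_1(t)|}+\tilde p_2(t)e^{-|x-\tilde q_2(t)|}$. Then $\tilde q_1(t)\le\tilde q_2(t)$ for $t>t_0$, $u(t,x)\to(c_1+c_2)e^{-|x|}$ as $t\downarrow t_0$, and for every $t>t_0$ $$\int_{\mathbb R}\big(u(t,x)^2+u_x(t,x)^2\big)dx=2d_1^2+2d_2^2=2c_1^2+2c_2^2+4\alpha c_1c_2 .$$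
   Context: Here $d_1=\tfrac12(c_1+c_2)+\sqrt{\tfrac14(c_1+c_2)^2-(1-\alpha)c_1c_2}$ and $d_2=\tfrac12(c_1+c_2)-\sqrt{\tfrac14(c_1+c_2)^2-(1-\alpha)c_1c_2}$. *)

From Stdlib Require Import Reals Lra ClassicalEpsilon ClassicalDescription.
Open Scope R_scope.

Definition dd1 (c1 c2 alpha : R) : R :=
  (c1 + c2) / 2 + sqrt ((c1 + c2) ^ 2 / 4 - (1 - alpha) * c1 * c2).
Definition dd2 (c1 c2 alpha : R) : R :=
  (c1 + c2) / 2 - sqrt ((c1 + c2) ^ 2 / 4 - (1 - alpha) * c1 * c2).
Definition Lt (c1 c2 alpha : R) : R := dd1 c1 c2 alpha - dd2 c1 c2 alpha.

Definition p1t (c1 c2 alpha t0 t : R) : R :=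
  let E := exp (- Lt c1 c2 alpha * (t - t0)) in
  (dd2 c1 c2 alpha - dd1 c1 c2 alpha * E) / (1 - E).
Definition p2t (c1 c2 alpha t0 t : R) : R :=
  let E := exp (- Lt c1 c2 alpha * (t - t0)) in
  (dd1 c1 c2 alpha - dd2 c1 c2 alpha * E) / (1 - E).
Definition q1t (c1 c2 alpha t0 t : R) : R :=
  let E := exp (- Lt c1 c2 alpha * (t - t0)) in
  ln (Lt c1 c2 alpha) + dd2 c1 c2 alpha * (t - t0)
  - ln (dd1 c1 c2 alpha * E - dd2 c1 c2 alpha).
Definition q2t (c1 c2 alpha t0 t : R) : R :=
  let E := exp (- Lt c1 c2 alpha * (t - t0)) in
  - ln (Lt c1 c2 alpha) + dd1 c1 c2 alpha * (t - t0)
  + ln (dd1 c1 c2 alpha - dd2 c1 c2 alpha * E).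

Definition u (c1 c2 alpha t0 t x : R) : R :=
  p1t c1 c2 alpha t0 t * exp (- Rabs (x - q1t c1 c2 alpha t0 t))
  + p2t c1 c2 alpha t0 t * exp (- Rabs (x - q2t c1 c2 alpha t0 t)).

(* Partial derivative in x: the derivative where it exists, 0 elsewhere
   (only finitely many points, irrelevant for the integral). *)
Definition deriv_or0 (f : R -> R) (x : R) : R :=
  match excluded_middle_informative (exists l, derivable_pt_lim f x l) with
  | left H => proj1_sig (constructive_indefinite_description _ H)
  | right _ => 0
  end.

Definition improper_integral_R (f : R -> R) (V : R) : Prop :=
  (forall a b, inhabited (Riemann_integrable f a b)) /\
  forall eps, 0 < eps -> exists M, forall a b (pr : Riemann_integrable f a b),
    a <= - M -> M <= b -> Rabs (RiemannInt pr - V) < eps.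

From Stdlib Require Import Reals Lra ClassicalEpsilon ClassicalDescription.
From Coquelicot Require Import Coquelicot.
Open Scope R_scope.

(* On each of the three intervals cut out by q1 < q2, a two-peakon profile is
   f + g with f' = f and g' = -g, so u^2 + u_x^2 = 2 f^2 + 2 g^2 = (f^2 - g^2)';
   summing the pieces and letting the tails go to zero gives the H^1 energy
   2 p1^2 + 2 p2^2 + 4 p1 p2 e^(q1 - q2).  With a_i = e^(d_i tau) all of p~_i and
   e^(q~_i) are rational in a_1, a_2, and e^(q~2 - q~1) - 1 = -d1 d2 (a1 - a2)^2 /
   ((d1 - d2)^2 a1 a2) > 0; this orders the peaks and turns the energy into
   2 d1^2 + 2 d2^2, which equals 2 c1^2 + 2 c2^2 + 4 alpha c1 c2 because d1, d2
   are the roots of X^2 - (c1 + c2) X + (1 - alpha) c1 c2.  As t decreases to t0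
   the amplitudes blow up (peakon-antipeakon collision), but p~1 + p~2 = c1 + c2,
   q~1 -> 0 and p~2 (q~2 - q~1) <= p~2 (e^(q~2 - q~1) - 1) -> 0; since e^(-|x|) is
   1-Lipschitz, u converges to (c1 + c2) e^(-|x|). *)

Lemma exp_le_compat x y : x <= y -> exp x <= exp y.
Proof.
  intros [H | ->]; [left; apply exp_increasing; exact H | apply Rle_refl].
Qed.

Lemma exp_sub x y : exp (x - y) = exp x / exp y.
Proof. unfold Rminus, Rdiv. rewrite exp_plus, exp_Ropp. reflexivity. Qed.

Lemma exp_sub_le_nonpos u v : v <= u -> u <= 0 -> 0 <= exp u - exp v <= u - v.
Proof.
  intros Hvu Hu.
  assert (exp u <= 1) by (rewrite <- exp_0; apply exp_le_compat; exact Hu).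
  assert (exp (v - u) <= 1) by (rewrite <- exp_0; apply exp_le_compat; lra).
  assert (Hv : exp v = exp u * exp (v - u)) by (rewrite <- exp_plus; f_equal; ring).
  assert (E := exp_ineq1_le (v - u)). assert (P := exp_pos u).
  rewrite Hv. split; nra.
Qed.

Lemma exp_neg_abs_left x q : x <= q -> exp (- Rabs (x - q)) = exp (x - q).
Proof. intros H; rewrite Rabs_left1 by lra; f_equal; ring. Qed.

Lemma exp_neg_abs_right x q : q <= x -> exp (- Rabs (x - q)) = exp (q - x).
Proof. intros H; rewrite Rabs_right by lra; f_equal; ring. Qed.

Lemma exp_neg_abs_lipschitz x y :
  Rabs (exp (- Rabs x) - exp (- Rabs y)) <= Rabs (x - y).
Proof.
  apply Rle_trans with (Rabs (Rabs x - Rabs y)); [|apply Rabs_triang_inv2].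
  assert (Hx := Rabs_pos x). assert (Hy := Rabs_pos y).
  destruct (Rle_or_lt (Rabs x) (Rabs y)).
  - destruct (exp_sub_le_nonpos (- Rabs x) (- Rabs y)); try lra.
    rewrite (Rabs_pos_eq (exp _ - _)), (Rabs_left1 (Rabs x - Rabs y)); lra.
  - destruct (exp_sub_le_nonpos (- Rabs y) (- Rabs x)); try lra.
    rewrite (Rabs_left1 (exp _ - _)), (Rabs_pos_eq (Rabs x - Rabs y)); lra.
Qed.

Lemma exp_tails_small A B eps : 0 < eps ->
  exists M, forall a b, a <= - M -> M <= b ->
    (exp a * A) ^ 2 + (exp (- b) * B) ^ 2 < eps.
Proof.
  intros Heps.
  set (K := A ^ 2 + B ^ 2 + 1).
  assert (HK : 0 < K) by (unfold K; nra).
  exists (Rabs (ln (K / eps))). intros a b Ha Hb.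
  set (e := exp (- Rabs (ln (K / eps)))).
  assert (He0 : 0 < e) by apply exp_pos.
  assert (He1 : e <= 1).
  { unfold e; rewrite <- exp_0; apply exp_le_compat; generalize (Rabs_pos (ln (K / eps))); lra. }
  assert (HeK : e * K <= eps).
  { assert (e <= eps / K).
    { unfold e. rewrite <- (exp_ln (eps / K)) by (apply Rdiv_lt_0_compat; lra).
      apply exp_le_compat. rewrite ln_div, ln_div by lra.
      generalize (Rle_abs (ln K - ln eps)); lra. }
    apply Rmult_le_reg_r with (/ K); [apply Rinv_0_lt_compat; lra|].
    replace (e * K * / K) with e by (field; lra). exact H. }
  assert (Ea : 0 < exp a <= e) by (split; [apply exp_pos | apply exp_le_compat; lra]).
  assert (Eb : 0 < exp (- b) <= e) by (split; [apply exp_pos | apply exp_le_compat; lra]).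
  assert (exp a ^ 2 <= e) by nra.
  assert (exp (- b) ^ 2 <= e) by nra.
  rewrite !Rpow_mult_distr.
  assert (exp a ^ 2 * A ^ 2 <= e * A ^ 2) by (apply Rmult_le_compat_r; nra).
  assert (exp (- b) ^ 2 * B ^ 2 <= e * B ^ 2) by (apply Rmult_le_compat_r; nra).
  unfold K in HeK. nra.
Qed.

Lemma deriv_or0_eq f x l : derivable_pt_lim f x l -> deriv_or0 f x = l.
Proof.
  intros H. unfold deriv_or0.
  destruct (excluded_middle_informative (exists l0, derivable_pt_lim f x l0)) as [H1|H1].
  - destruct (constructive_indefinite_description _ H1) as [l' Hl']; simpl.
    exact (uniqueness_limite f x l' l Hl' H).
  - exfalso; apply H1; exists l; exact H.
Qed.

Lemma limit1_in_dominated (f g : R -> R) (D : R -> Prop) (l x0 : R) :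
  continuous g x0 -> g x0 = 0 -> (forall x, D x -> Rabs (f x - l) <= g x) ->
  limit1_in f D l x0.
Proof.
  intros Hg Hg0 Hfg eps Heps.
  apply continuity_pt_filterlim in Hg. destruct (Hg eps Heps) as [del [Hdel Hnear]].
  exists del. split; [exact Hdel |]. intros x [Dx Hx]. simpl in *. unfold R_dist in *.
  apply Rle_lt_trans with (g x); [apply Hfg; exact Dx |].
  destruct (Req_dec x x0) as [-> | Hne]; [lra |].
  specialize (Hnear x (conj (conj I (not_eq_sym Hne)) Hx)). simpl in Hnear.
  unfold R_dist in Hnear. rewrite Hg0, Rminus_0_r in Hnear.
  generalize (Rle_abs (g x)); lra.
Qed.

Lemma is_RInt_energy_piece (v f g : R -> R) (a b : R) :
  a < b ->
  (forall x, is_derive f x (f x)) -> (forall x, is_derive g x (- g x)) ->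
  (forall x, a < x < b -> v x = f x + g x) ->
  is_RInt (fun x => v x ^ 2 + deriv_or0 v x ^ 2) a b
    ((f b ^ 2 - g b ^ 2) - (f a ^ 2 - g a ^ 2)).
Proof.
  intros Hab Hf Hg Hv.
  assert (Hdv : forall x, a < x < b -> deriv_or0 v x = f x - g x).
  { intros x Hx. apply deriv_or0_eq, is_derive_Reals.
    apply is_derive_ext_loc with (f := fun y => f y + g y).
    - apply filter_imp with (P := fun y => a < y /\ y < b).
      + intros y Hy. symmetry; apply Hv; exact Hy.
      + apply (open_and _ _ (open_gt a) (open_lt b)); exact Hx.
    - replace (f x - g x) with (f x + - g x) by ring.
      exact (is_derive_plus f g x _ _ (Hf x) (Hg x)). }
  apply is_RInt_ext with (f := fun x => 2 * f x ^ 2 + 2 * g x ^ 2).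
  - rewrite Rmin_left, Rmax_right by lra. intros x Hx.
    rewrite Hdv, Hv by exact Hx. simpl; ring.
  - apply (is_RInt_derive (fun x => f x ^ 2 - g x ^ 2)).
    + intros x _. auto_derive.
      * split; [exists (f x); apply Hf | split; [exists (- g x); apply Hg | exact I]].
      * rewrite (is_derive_unique (fun y : R => f y) x _ (Hf x)),
          (is_derive_unique (fun y : R => g y) x _ (Hg x)). ring.
    + intros x _. apply (ex_derive_continuous (K := R_AbsRing) (V := R_NormedModule)).
      auto_derive.
      split; [exists (f x); apply Hf | split; [exists (- g x); apply Hg | exact I]].
Qed.

Definition peakon2 (p1 p2 q1 q2 x : R) : R :=
  p1 * exp (- Rabs (x - q1)) + p2 * exp (- Rabs (x - q2)).

Lemma peakon2_dist_single p1 p2 q1 q2 x : 0 <= p2 -> q1 <= q2 ->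
  Rabs (peakon2 p1 p2 q1 q2 x - (p1 + p2) * exp (- Rabs x))
  <= Rabs (p1 + p2) * Rabs q1 + p2 * (q2 - q1).
Proof.
  intros Hp2 Hq. unfold peakon2.
  replace (p1 * exp (- Rabs (x - q1)) + p2 * exp (- Rabs (x - q2)) - (p1 + p2) * exp (- Rabs x))
    with ((p1 + p2) * (exp (- Rabs (x - q1)) - exp (- Rabs x))
          + p2 * (exp (- Rabs (x - q2)) - exp (- Rabs (x - q1)))) by ring.
  eapply Rle_trans; [apply Rabs_triang |].
  rewrite !Rabs_mult, (Rabs_pos_eq p2) by exact Hp2.
  apply Rplus_le_compat; apply Rmult_le_compat_l; try apply Rabs_pos; try exact Hp2;
    eapply Rle_trans; try apply exp_neg_abs_lipschitz.
  - replace (x - q1 - x) with (- q1) by ring. rewrite Rabs_Ropp. apply Rle_refl.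
  - replace (x - q2 - (x - q1)) with (- (q2 - q1)) by ring.
    rewrite Rabs_Ropp, Rabs_pos_eq by lra. apply Rle_refl.
Qed.

Section TwoPeakonEnergy.

Variables p1 p2 q1 q2 : R.
Hypothesis Hq : q1 < q2.

Let energy_density x :=
  peakon2 p1 p2 q1 q2 x ^ 2 + deriv_or0 (peakon2 p1 p2 q1 q2) x ^ 2.

Lemma is_RInt_peakon2_energy a b : a < q1 -> q2 < b ->
  is_RInt energy_density a b
    (2 * p1 ^ 2 + 2 * p2 ^ 2 + 4 * p1 * p2 * exp (q1 - q2)
     - (exp a * (p1 * exp (- q1) + p2 * exp (- q2))) ^ 2
     - (exp (- b) * (p1 * exp q1 + p2 * exp q2)) ^ 2).
Proof.
  intros Ha Hb.
  eassert (Left : is_RInt energy_density a q1 _).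
  { apply (is_RInt_energy_piece _
      (fun x => p1 * exp (x - q1) + p2 * exp (x - q2)) (fun _ => 0)); try lra.
    - intros x; auto_derive; auto; unfold Rminus; ring.
    - intros x; auto_derive; auto; unfold Rminus; ring.
    - intros x Hx; unfold peakon2; rewrite !exp_neg_abs_left by lra; ring. }
  eassert (Mid : is_RInt energy_density q1 q2 _).
  { apply (is_RInt_energy_piece _
      (fun x => p2 * exp (x - q2)) (fun x => p1 * exp (q1 - x))); try lra.
    - intros x; auto_derive; auto; unfold Rminus; ring.
    - intros x; auto_derive; auto; unfold Rminus; ring.
    - intros x Hx; unfold peakon2.
      rewrite exp_neg_abs_right, exp_neg_abs_left by lra; ring. }
  eassert (Right : is_RInt energy_density q2 b _).
  { apply (is_RInt_energy_piece _
      (fun _ => 0) (fun x => p1 * exp (q1 - x) + p2 * exp (q2 - x))); try lra.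
    - intros x; auto_derive; auto; unfold Rminus; ring.
    - intros x; auto_derive; auto; unfold Rminus; ring.
    - intros x Hx; unfold peakon2; rewrite !exp_neg_abs_right by lra; ring. }
  refine (eq_ind _ (is_RInt energy_density a b)
            (is_RInt_Chasles _ _ _ _ _ _ (is_RInt_Chasles _ _ _ _ _ _ Left Mid) Right) _ _).
  unfold plus; simpl. rewrite !Rminus_diag, exp_0.
  unfold Rminus; rewrite !exp_plus. ring.
Qed.

Lemma ex_RInt_peakon2_energy a b : ex_RInt energy_density a b.
Proof.
  set (r := Rabs a + Rabs b + Rabs q1 + Rabs q2 + 1).
  assert (Hr := conj (Rabs_pos a) (conj (Rabs_pos b) (conj (Rabs_pos q1) (Rabs_pos q2)))).
  assert (Hq1 := Rabs_maj2 q1). assert (Hq2 := Rle_abs q2).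
  apply (ex_RInt_inside (V := R_CompleteNormedModule) _ a b 0 r).
  - eexists; apply is_RInt_peakon2_energy; unfold r; lra.
  - rewrite Rminus_0_r; unfold r; lra.
  - rewrite Rminus_0_r; unfold r; lra.
Qed.

Lemma improper_integral_peakon2_energy :
  improper_integral_R energy_density
    (2 * p1 ^ 2 + 2 * p2 ^ 2 + 4 * p1 * p2 * exp (q1 - q2)).
Proof.
  split.
  - intros a b; constructor; apply ex_RInt_Reals_0, ex_RInt_peakon2_energy.
  - intros eps Heps.
    destruct (exp_tails_small (p1 * exp (- q1) + p2 * exp (- q2))
                (p1 * exp q1 + p2 * exp q2) eps Heps) as [M HM].
    exists (Rmax M (Rabs q1 + Rabs q2 + 1)). intros a b pr Ha Hb.
    assert (HM1 := Rmax_l M (Rabs q1 + Rabs q2 + 1)).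
    assert (HM2 := Rmax_r M (Rabs q1 + Rabs q2 + 1)).
    assert (Hq1 := Rabs_maj2 q1). assert (Hq2 := Rle_abs q2).
    assert (Hr := conj (Rabs_pos q1) (Rabs_pos q2)).
    rewrite <- RInt_Reals, (is_RInt_unique _ _ _ _
      (is_RInt_peakon2_energy a b ltac:(lra) ltac:(lra))).
    specialize (HM a b ltac:(lra) ltac:(lra)).
    rewrite Rabs_left1; [lra |].
    generalize (pow2_ge_0 (exp a * (p1 * exp (- q1) + p2 * exp (- q2))))
      (pow2_ge_0 (exp (- b) * (p1 * exp q1 + p2 * exp q2))); lra.
Qed.

End TwoPeakonEnergy.

(* With [tau = t - t0], [d1 = dd1 c1 c2 alpha] and [d2 = dd2 c1 c2 alpha], these are
   the paper's p~_i(t) and q~_i(t): [p1t], ..., [q2t] unfold to them. *)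
Definition decay d1 d2 tau := exp (- (d1 - d2) * tau).
Definition pt1 d1 d2 tau := (d2 - d1 * decay d1 d2 tau) / (1 - decay d1 d2 tau).
Definition pt2 d1 d2 tau := (d1 - d2 * decay d1 d2 tau) / (1 - decay d1 d2 tau).
Definition qt1 d1 d2 tau := ln (d1 - d2) + d2 * tau - ln (d1 * decay d1 d2 tau - d2).
Definition qt2 d1 d2 tau := - ln (d1 - d2) + d1 * tau + ln (d1 - d2 * decay d1 d2 tau).

(* [pt2 * (exp (qt2 - qt1) - 1)] in closed form; unlike [pt2] it is smooth at
   [tau = 0], where it vanishes. *)
Definition pt2_gap_bound d1 d2 tau :=
  - (d1 * d2) * (d1 * exp (d1 * tau) - d2 * exp (d2 * tau)) * (exp (d1 * tau) - exp (d2 * tau))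
  / ((d1 - d2) ^ 2 * exp (d1 * tau) * exp (d2 * tau)).

Section TwoPeakonParameters.

Variables d1 d2 : R.
Hypotheses (Hd1 : 0 < d1) (Hd2 : d2 < 0).

Lemma decay_eq tau : decay d1 d2 tau = exp (d2 * tau) / exp (d1 * tau).
Proof.
  unfold decay. replace (- (d1 - d2) * tau) with (d2 * tau - d1 * tau) by ring.
  apply exp_sub.
Qed.

Lemma exp_qt1 tau : exp (qt1 d1 d2 tau)
  = (d1 - d2) * exp (d1 * tau) * exp (d2 * tau)
    / (d1 * exp (d2 * tau) - d2 * exp (d1 * tau)).
Proof.
  assert (E1 := exp_pos (d1 * tau)). assert (E2 := exp_pos (d2 * tau)).
  assert (0 < d1 * exp (d2 * tau) - d2 * exp (d1 * tau)) by nra.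
  unfold qt1. rewrite decay_eq.
  replace (d1 * (exp (d2 * tau) / exp (d1 * tau)) - d2)
    with ((d1 * exp (d2 * tau) - d2 * exp (d1 * tau)) / exp (d1 * tau)) by (field; lra).
  rewrite exp_sub, exp_plus, !exp_ln; try lra.
  - field. lra.
  - apply Rdiv_lt_0_compat; lra.
Qed.

Lemma exp_qt2 tau : exp (qt2 d1 d2 tau)
  = (d1 * exp (d1 * tau) - d2 * exp (d2 * tau)) / (d1 - d2).
Proof.
  assert (E1 := exp_pos (d1 * tau)). assert (E2 := exp_pos (d2 * tau)).
  assert (0 < d1 * exp (d1 * tau) - d2 * exp (d2 * tau)) by nra.
  unfold qt2. rewrite decay_eq.
  replace (d1 - d2 * (exp (d2 * tau) / exp (d1 * tau)))
    with ((d1 * exp (d1 * tau) - d2 * exp (d2 * tau)) / exp (d1 * tau)) by (field; lra).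
  rewrite !exp_plus, exp_Ropp, !exp_ln; try lra.
  - field. lra.
  - apply Rdiv_lt_0_compat; lra.
Qed.

Lemma exp_qt2_sub_qt1 tau : exp (qt2 d1 d2 tau - qt1 d1 d2 tau)
  = 1 + - (d1 * d2) * (exp (d1 * tau) - exp (d2 * tau)) ^ 2
        / ((d1 - d2) ^ 2 * exp (d1 * tau) * exp (d2 * tau)).
Proof.
  assert (E1 := exp_pos (d1 * tau)). assert (E2 := exp_pos (d2 * tau)).
  assert (0 < d1 * exp (d2 * tau) - d2 * exp (d1 * tau)) by nra.
  rewrite exp_sub, exp_qt1, exp_qt2.
  field. repeat split; lra.
Qed.

Lemma pt1_eq tau : 0 < tau ->
  pt1 d1 d2 tau = (d2 * exp (d1 * tau) - d1 * exp (d2 * tau))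
                  / (exp (d1 * tau) - exp (d2 * tau)).
Proof.
  intros Ht. assert (E1 := exp_pos (d1 * tau)).
  assert (exp (d2 * tau) < exp (d1 * tau)) by (apply exp_increasing; nra).
  unfold pt1. rewrite decay_eq. field. lra.
Qed.

Lemma pt2_eq tau : 0 < tau ->
  pt2 d1 d2 tau = (d1 * exp (d1 * tau) - d2 * exp (d2 * tau))
                  / (exp (d1 * tau) - exp (d2 * tau)).
Proof.
  intros Ht. assert (E1 := exp_pos (d1 * tau)).
  assert (exp (d2 * tau) < exp (d1 * tau)) by (apply exp_increasing; nra).
  unfold pt2. rewrite decay_eq. field. lra.
Qed.

Lemma pt1_add_pt2 tau : 0 < tau -> pt1 d1 d2 tau + pt2 d1 d2 tau = d1 + d2.
Proof.
  intros Ht. assert (E1 := exp_pos (d1 * tau)).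
  assert (exp (d2 * tau) < exp (d1 * tau)) by (apply exp_increasing; nra).
  rewrite pt1_eq, pt2_eq by exact Ht. field. lra.
Qed.

Lemma pt2_gt0 tau : 0 < tau -> 0 < pt2 d1 d2 tau.
Proof.
  intros Ht. assert (E2 := exp_pos (d2 * tau)).
  assert (exp (d2 * tau) < exp (d1 * tau)) by (apply exp_increasing; nra).
  rewrite pt2_eq by exact Ht. apply Rdiv_lt_0_compat; nra.
Qed.

Lemma qt1_lt_qt2 tau : 0 < tau -> qt1 d1 d2 tau < qt2 d1 d2 tau.
Proof.
  intros Ht. assert (E1 := exp_pos (d1 * tau)). assert (E2 := exp_pos (d2 * tau)).
  assert (exp (d2 * tau) < exp (d1 * tau)) by (apply exp_increasing; nra).
  apply Rlt_0_minus, exp_lt_inv. rewrite exp_qt2_sub_qt1, exp_0.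
  assert (0 < - (d1 * d2) * (exp (d1 * tau) - exp (d2 * tau)) ^ 2
              / ((d1 - d2) ^ 2 * exp (d1 * tau) * exp (d2 * tau))).
  { apply Rdiv_lt_0_compat; [apply Rmult_lt_0_compat; [nra | apply pow_lt; lra] |].
    apply Rmult_lt_0_compat; [apply Rmult_lt_0_compat; [apply pow_lt|]|]; lra. }
  lra.
Qed.

Lemma peakon2_energy_pt tau : 0 < tau ->
  2 * pt1 d1 d2 tau ^ 2 + 2 * pt2 d1 d2 tau ^ 2
  + 4 * pt1 d1 d2 tau * pt2 d1 d2 tau * exp (qt1 d1 d2 tau - qt2 d1 d2 tau)
  = 2 * d1 ^ 2 + 2 * d2 ^ 2.
Proof.
  intros Ht. assert (E1 := exp_pos (d1 * tau)). assert (E2 := exp_pos (d2 * tau)).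
  assert (exp (d2 * tau) < exp (d1 * tau)) by (apply exp_increasing; nra).
  assert (0 < d1 * exp (d1 * tau) - d2 * exp (d2 * tau)) by nra.
  rewrite exp_sub, exp_qt1, exp_qt2, pt1_eq, pt2_eq by exact Ht.
  field. repeat split; nra.
Qed.

Lemma pt2_mul_gap_le tau : 0 < tau ->
  pt2 d1 d2 tau * (qt2 d1 d2 tau - qt1 d1 d2 tau) <= pt2_gap_bound d1 d2 tau.
Proof.
  intros Ht. assert (E1 := exp_pos (d1 * tau)). assert (E2 := exp_pos (d2 * tau)).
  assert (exp (d2 * tau) < exp (d1 * tau)) by (apply exp_increasing; nra).
  apply Rle_trans with (pt2 d1 d2 tau * (exp (qt2 d1 d2 tau - qt1 d1 d2 tau) - 1)).
  - apply Rmult_le_compat_l; [left; apply pt2_gt0; exact Ht |].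
    generalize (exp_ineq1_le (qt2 d1 d2 tau - qt1 d1 d2 tau)); lra.
  - right. rewrite exp_qt2_sub_qt1, pt2_eq by exact Ht. unfold pt2_gap_bound.
    field. repeat split; lra.
Qed.

Lemma continuous_qt1 tau : continuous (qt1 d1 d2) tau.
Proof.
  apply (ex_derive_continuous (K := R_AbsRing) (V := R_NormedModule)).
  unfold qt1, decay. auto_derive.
  assert (0 < exp (- (d1 - d2) * tau)) by apply exp_pos. nra.
Qed.

Lemma continuous_pt2_gap_bound tau : continuous (pt2_gap_bound d1 d2) tau.
Proof.
  apply (ex_derive_continuous (K := R_AbsRing) (V := R_NormedModule)).
  unfold pt2_gap_bound. auto_derive.
  assert (E1 := exp_pos (d1 * tau)). assert (E2 := exp_pos (d2 * tau)).
  apply Rgt_not_eq. repeat apply Rmult_gt_0_compat; lra.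
Qed.

Lemma qt1_at0 : qt1 d1 d2 0 = 0.
Proof. unfold qt1, decay. rewrite !Rmult_0_r, exp_0, Rmult_1_r. ring. Qed.

Lemma pt2_gap_bound_at0 : pt2_gap_bound d1 d2 0 = 0.
Proof. unfold pt2_gap_bound. rewrite !Rmult_0_r, exp_0. unfold Rdiv. ring. Qed.

Lemma limit1_in_peakon2_pt t0 x :
  limit1_in (fun t => peakon2 (pt1 d1 d2 (t - t0)) (pt2 d1 d2 (t - t0))
                              (qt1 d1 d2 (t - t0)) (qt2 d1 d2 (t - t0)) x)
    (fun t => t0 < t) ((d1 + d2) * exp (- Rabs x)) t0.
Proof.
  apply limit1_in_dominated with (g := fun t =>
    Rabs (d1 + d2) * Rabs (qt1 d1 d2 (t - t0)) + pt2_gap_bound d1 d2 (t - t0)).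
  - assert (Shift : forall h : R -> R, (forall tau, continuous h tau) ->
                      continuous (fun t => h (t - t0)) t0).
    { intros h Hh. apply (continuous_comp (fun t => t - t0) h); [| apply Hh].
      apply (ex_derive_continuous (K := R_AbsRing) (V := R_NormedModule)).
      auto_derive. exact I. }
    apply (continuous_plus (V := R_NormedModule)
             (fun t => Rabs (d1 + d2) * Rabs (qt1 d1 d2 (t - t0)))).
    + apply (continuous_mult (K := R_AbsRing) (fun _ => Rabs (d1 + d2))).
      * apply continuous_const.
      * apply continuous_Rabs_comp, (Shift (qt1 d1 d2)), continuous_qt1.
    + apply (Shift (pt2_gap_bound d1 d2)), continuous_pt2_gap_bound.
  - rewrite Rminus_diag, qt1_at0, pt2_gap_bound_at0, Rabs_R0. ring.
  - intros t Ht. assert (Htau : 0 < t - t0) by lra.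
    rewrite <- (pt1_add_pt2 _ Htau).
    eapply Rle_trans; [apply peakon2_dist_single |].
    + left; apply pt2_gt0; exact Htau.
    + left; apply qt1_lt_qt2; exact Htau.
    + apply Rplus_le_compat_l, pt2_mul_gap_le; exact Htau.
Qed.

End TwoPeakonParameters.

Section PeakonAmplitudes.

Variables c1 c2 alpha : R.
Hypotheses (Hc2 : c2 < 0) (Hc1 : 0 < c1) (Halpha : 0 <= alpha < 1).

Lemma dd1_add_dd2 : dd1 c1 c2 alpha + dd2 c1 c2 alpha = c1 + c2.
Proof. unfold dd1, dd2. field. Qed.

Lemma dd_discriminant_pos : 0 < (c1 + c2) ^ 2 / 4 - (1 - alpha) * c1 * c2.
Proof.
  assert (0 < (1 - alpha) * (c1 * - c2)) by (apply Rmult_lt_0_compat; nra).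
  generalize (pow2_ge_0 (c1 + c2)); lra.
Qed.

Lemma dd1_mul_dd2 : dd1 c1 c2 alpha * dd2 c1 c2 alpha = (1 - alpha) * c1 * c2.
Proof.
  assert (Hs := sqrt_sqrt _ (Rlt_le _ _ dd_discriminant_pos)).
  unfold dd1, dd2. set (r := sqrt _) in *.
  replace (((c1 + c2) / 2 + r) * ((c1 + c2) / 2 - r)) with ((c1 + c2) ^ 2 / 4 - r * r)
    by field.
  rewrite Hs. ring.
Qed.

Lemma dd2_lt0_lt_dd1 : dd2 c1 c2 alpha < 0 < dd1 c1 c2 alpha.
Proof.
  assert (Hprod := dd1_mul_dd2).
  assert (0 < (1 - alpha) * (c1 * - c2)) by (apply Rmult_lt_0_compat; nra).
  assert (dd2 c1 c2 alpha <= dd1 c1 c2 alpha).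
  { unfold dd1, dd2. generalize (sqrt_pos ((c1 + c2) ^ 2 / 4 - (1 - alpha) * c1 * c2)).
    lra. }
  split; nra.
Qed.

Lemma dd_energy : 2 * dd1 c1 c2 alpha ^ 2 + 2 * dd2 c1 c2 alpha ^ 2
  = 2 * c1 ^ 2 + 2 * c2 ^ 2 + 4 * alpha * c1 * c2.
Proof.
  replace (2 * dd1 c1 c2 alpha ^ 2 + 2 * dd2 c1 c2 alpha ^ 2)
    with (2 * (dd1 c1 c2 alpha + dd2 c1 c2 alpha) ^ 2
          - 4 * (dd1 c1 c2 alpha * dd2 c1 c2 alpha)) by ring.
  rewrite dd1_add_dd2, dd1_mul_dd2. ring.
Qed.

End PeakonAmplitudes.

Theorem mainTheorem8 (c1 c2 alpha t0 : R) :
  c2 < 0 -> 0 < c1 -> 0 <= alpha < 1 ->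
  (forall t, t0 < t -> q1t c1 c2 alpha t0 t <= q2t c1 c2 alpha t0 t) /\
  (forall x, limit1_in (fun t => u c1 c2 alpha t0 t x) (fun t => t0 < t)
               ((c1 + c2) * exp (- Rabs x)) t0) /\
  (forall t, t0 < t ->
     improper_integral_R
       (fun x => u c1 c2 alpha t0 t x ^ 2
                 + deriv_or0 (fun y => u c1 c2 alpha t0 t y) x ^ 2)
       (2 * dd1 c1 c2 alpha ^ 2 + 2 * dd2 c1 c2 alpha ^ 2)) /\
  2 * dd1 c1 c2 alpha ^ 2 + 2 * dd2 c1 c2 alpha ^ 2
    = 2 * c1 ^ 2 + 2 * c2 ^ 2 + 4 * alpha * c1 * c2.
Proof.
  intros Hc2 Hc1 Halpha.
  destruct (dd2_lt0_lt_dd1 c1 c2 alpha Hc2 Hc1 Halpha) as [Hd2 Hd1].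
  assert (Hgap : forall t, t0 < t ->
    qt1 (dd1 c1 c2 alpha) (dd2 c1 c2 alpha) (t - t0)
    < qt2 (dd1 c1 c2 alpha) (dd2 c1 c2 alpha) (t - t0)).
  { intros t Ht. apply qt1_lt_qt2; lra. }
  split; [| split; [| split]].
  - intros t Ht. left. exact (Hgap t Ht).
  - intros x. rewrite <- (dd1_add_dd2 c1 c2 alpha).
    exact (limit1_in_peakon2_pt _ _ Hd1 Hd2 t0 x).
  - intros t Ht. rewrite <- (peakon2_energy_pt _ _ Hd1 Hd2 (t - t0)) by lra.
    exact (improper_integral_peakon2_energy _ _ _ _ (Hgap t Ht)).
  - exact (dd_energy c1 c2 alpha Hc2 Hc1 Halpha).
Qed.
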